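(* For any integers $k,l\geq 1$, the subsets $C_{k,l}$ and $\Phi_{k,l}C_{l,k}=\{\Phi_{k,l}\circ\tau\mid\tau\in C_{l,k}\}$ of $S_{k+l}$ are disjoint.
   Context: $S_m$ is the symmetric group on $\{1,\dots,m\}$ with product given by composition. An $(s,t)$-shuffle is a pair $(\alpha,\beta)$ of strictly increasing maps $\alpha:\{1,\dots,s\}\to\{1,\dots,s+t\}$, $\beta:\{1,\dots,t\}\to\{1,\dots,s+t\}$ with disjoint images; ${\sf Sh}^1(s,t)$ is the set of those with $\alpha(1)=1$. For $p,q\geq1$, $0\leq i\leq q-1$ and $(\alpha,\beta)\in{\sf Sh}^1(q-i,i)$, let $\tilde\sigma_{\alpha,\beta,p,q}\in S_{p+q}$ be given by $\tilde\sigma(j)=j$ for $1\leq j\leq p$, $\tilde\sigma(p+j)=p+\beta(i+1-j)$ for $1\leq j\leq i$, $\tilde\sigma(p+i+j)=p+\alpha(j)$ for $1\leq j\leq q-i$; let $\sigma_{\alpha,\beta,p,q}=\tilde\sigma_{\alpha,\beta,p,q}\circ(1,2)^i$ where $(1,2)$ is the transposition. Set $C_{p,q}=\{\sigma_{\alpha,\beta,p,q}\mid 0\leq i\leq q-1,\ (\alpha,\beta)\in{\sf Sh}^1(q-i,i)\}\subseteq S_{p+q}$. $\Phi_{k,l}\in S_{k+l}$ is defined by $\Phi_{k,l}(i)=i+k$ if $i\leq l$ and $\Phi_{k,l}(i)=i-l$ if $i>l$. *)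

(* Permutations in S_m are elements of 'S_m = {perm 'I_m};
   the paper's 1-indexed points {1,..,m} correspond to ordinals via j <-> j-1. *)
From mathcomp Require Import all_boot all_order all_fingroup.
Unset Printing Implicit Defensive.

(* 1-indexed view of a permutation s : 'S_m as a map on {1..m} (identity outside). *)
Definition ext1 {m : nat} (s : 'S_m) (j : nat) : nat :=
  if 0 < j then
    match @insub nat (fun x => x < m) 'I_m j.-1 with
    | Some x => (s x).+1
    | None => j
    end
  else j.

Definition is_shuffle (s t : nat) (alpha beta : nat -> nat) : Prop :=
  [/\ (forall j j', 1 <= j -> j < j' -> j' <= s -> alpha j < alpha j'),
      (forall j j', 1 <= j -> j < j' -> j' <= t -> beta j < beta j'),
      (forall j, 1 <= j <= s -> 1 <= alpha j <= s + t),
      (forall j, 1 <= j <= t -> 1 <= beta j <= s + t) &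
      (forall j j', 1 <= j <= s -> 1 <= j' <= t -> alpha j <> beta j')].

Definition in_Sh1 (s t : nat) (alpha beta : nat -> nat) : Prop :=
  is_shuffle s t alpha beta /\ alpha 1 = 1.

Definition tsigma (p q i : nat) (alpha beta : nat -> nat) (j : nat) : nat :=
  if j <= p then j
  else if j <= p + i then p + beta (i + 1 - (j - p))
  else p + alpha (j - p - i).

Definition tr12 (j : nat) : nat :=
  if j == 1 then 2 else if j == 2 then 1 else j.

Definition sigma_fun (p q i : nat) (alpha beta : nat -> nat) (j : nat) : nat :=
  tsigma p q i alpha beta (iter i tr12 j).

Definition inC (p q : nat) (s : 'S_(p + q)) : Prop :=
  exists i alpha beta,
    i <= q - 1 /\ in_Sh1 (q - i) i alpha beta /\
    (forall j, 1 <= j <= p + q -> ext1 s j = sigma_fun p q i alpha beta j).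

Definition Phi_fun (k l : nat) (i : nat) : nat :=
  if i <= l then i + k else i - l.

Definition inPhiC (k l : nat) (s : 'S_(k + l)) : Prop :=
  exists tau : 'S_(l + k), inC l k tau /\
    (forall j, 1 <= j <= k + l -> ext1 s j = Phi_fun k l (ext1 tau j)).

From mathcomp Require Import all_boot all_order all_fingroup.
From mathcomp Require Import zify.

(* Everything is decided by the value at the point 1.  For sigma in C_{p,q},
   sigma(1) is 1 or 2 when p >= 2, is 1 when i = 0 (forced if q = 1), and is
   never 2 when p = 1: then an odd i sends 1 to 1 + beta(i), and beta(i) differs
   from alpha(1) = 1.  Composing with Phi_{k,l} moves tau(1) into the wrong place
   in each of the cases k = 1, l = 1, and k, l >= 2. *)

Lemma iter_tr12_1 i : iter i tr12 1 = if odd i then 2 else 1.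
Proof. by elim: i => [//|i IH]; rewrite iterS IH /=; case: (odd i). Qed.

Lemma sigma_fun0_1 p q a b : 1 <= p -> sigma_fun p q 0 a b 1 = 1.
Proof. by move=> p_gt0; rewrite /sigma_fun /= /tsigma p_gt0. Qed.

Lemma sigma_fun_1_le2 p q i a b : 2 <= p -> 1 <= sigma_fun p q i a b 1 <= 2.
Proof.
move=> p_ge2; rewrite /sigma_fun iter_tr12_1 /tsigma.
by case: (odd i); [rewrite p_ge2 | rewrite (leq_trans _ p_ge2)].
Qed.

Lemma sigma_fun1_1_neq2 q i alpha beta : i <= q - 1 -> in_Sh1 (q - i) i alpha beta ->
  sigma_fun 1 q i alpha beta 1 <> 2.
Proof.
move=> le_iq [[_ _ _ beta_range alpha_neq_beta] alpha1].
rewrite /sigma_fun iter_tr12_1 /tsigma.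
case odd_i: (odd i) => //=.
have i_gt0 : 1 <= i by move: odd_i; case: (i).
have beta_i_neq1 : beta i <> 1.
  by rewrite -alpha1; apply/nesym/alpha_neq_beta; lia.
have := beta_range i (ltac:(lia)).
have -> : (2 <= 1 + i) = true by lia.
have -> : i + 1 - (2 - 1) = i by lia.
lia.
Qed.

Section ValueAtOne.

Context {p q : nat} {s : 'S_(p + q)}.
Hypothesis sC : inC p q s.

Lemma inC_ext1_1_le2 : 2 <= p -> 1 <= ext1 s 1 <= 2.
Proof.
move=> p_ge2; have [i [a [b [_ [_ s_eq]]]]] := sC.
by rewrite s_eq ?sigma_fun_1_le2 //; lia.
Qed.

Lemma inC_ext1_1_eq1 : 1 <= p -> q = 1 -> ext1 s 1 = 1.
Proof.
move=> p_gt0 q1; have [i [a [b [le_iq [_ s_eq]]]]] := sC.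
have i0 : i = 0 by lia.
by rewrite s_eq ?i0 ?sigma_fun0_1 //; lia.
Qed.

Lemma inC_ext1_1_neq2 : p = 1 -> ext1 s 1 <> 2.
Proof.
move=> p1; have [i [a [b [le_iq [sh s_eq]]]]] := sC.
by rewrite s_eq ?p1; [apply: sigma_fun1_1_neq2 | lia].
Qed.

End ValueAtOne.

Theorem lemma4 (k l : nat) : 1 <= k -> 1 <= l ->
  forall s : 'S_(k + l), ~ (inC k l s /\ inPhiC k l s).
Proof.
move=> k_gt0 l_gt0 s [sC [tau [tauC s_eq]]].
have := s_eq 1 (ltac:(lia)); rewrite /Phi_fun.
have [k1|k_ge2] : k = 1 \/ 2 <= k by lia.
- rewrite (inC_ext1_1_eq1 tauC) // l_gt0.
  have := inC_ext1_1_neq2 sC k1.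
  lia.
have [l1|l_ge2] : l = 1 \/ 2 <= l by lia.
- rewrite (inC_ext1_1_eq1 sC) //.
  have := inC_ext1_1_neq2 tauC l1.
  by case: ifP; lia.
have := inC_ext1_1_le2 sC k_ge2.
have := inC_ext1_1_le2 tauC l_ge2.
by case: ifP; lia.
Qed.
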